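(* Let $P$ be a normal program. Then the well-founded model $WFM(P)$ has a finite number of true atoms if and only if $P$ has the bounded term-size property.
   Context: Programs are over a first-order language with finitely many function and constant symbols. A normal program $P$ is a set of clauses $B \leftarrow L_1,\ldots,L_n$ where $B$ is an atom and each $L_i$ is a literal (an atom $A$ or a negated atom $\neg A$); $\mathcal{H}_P$ is its Herbrand base. A 3-valued interpretation is a pair $I=\langle Tr;Fa\rangle$ of subsets of $\mathcal{H}_P$; an atom $A$ is true in $I$ if $A\in Tr$ and false if $A \in Fa$; $\neg A$ is true in $I$ iff $A$ is false in $I$, and false iff $A$ is true in $I$. For a 3-valued interpretation $I$ and sets $Tr, Fa$ of ground atoms define $True^P_I(Tr)=\{A \mid A$ is not true in $I$, and there is a clause $B\leftarrow L_1,\ldots,L_n$ in $P$ and a ground substitution $\theta$ with $A=B\theta$ such that for every $1\le i\le n$, either $L_i\theta$ is true in $I$ or $L_i\theta\in Tr\}$; $False^P_I(Fa)=\{A \mid A$ is not false in $I$, and for every clause $B\leftarrow L_1,\ldots,L_n$ in $P$ and ground substitution $\theta$ with $A=B\theta$ there is some $i$ with $L_i\theta$ false in $I$ or $L_i\theta\in Fa\}$. Both are monotonic; $\mathcal{T}_I$ is the least fixed point of $True^P_I$ (obtained by iterating from $\emptyset$) and $\mathcal{F}_I$ the greatest fixed point of $False^P_I$ (obtained by iterating from $\mathcal{H}_P$). Define $WFM_0=\langle\emptyset;\emptyset\rangle$, $WFM_{\alpha+1}=WFM_\alpha\cup\langle \mathcal{T}_{WFM_\alpha};\mathcal{F}_{WFM_\alpha}\rangle$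 (componentwise union), and $WFM_\alpha=\bigcup_{\beta<\alpha}WFM_\beta$ for limit ordinals $\alpha$. $WFM(P)$ is $WFM_\delta$ for the least ordinal $\delta$ such that $\mathcal{T}_{WFM_\delta}$ and $\mathcal{F}_{WFM_\delta}$ are both empty; it is the well-founded model of $P$. Bounded term-size: an application of $True^P_I(Tr)$ has the bounded term-size property if there is an integer $L$ such that the size of every ground substitution $\theta$ used to produce an atom in $True^P_I(Tr)$ is less than $L$. The program $P$ has the bounded term-size property if every application of $True^P_I$ used to construct $WFM(P)$ has the bounded term-size property with the same bound $L$. *)

From Stdlib Require Import List Arith.
Import ListNotations.

Section LP.

(* function symbols (constants = arity 0) and predicate symbols *)
Variable F : Type.
Variable ar : F -> nat.
Variable Pd : Type.

Inductive term : Type :=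
| Var : nat -> term
| App : F -> list term -> term.

Inductive gterm : Type :=
| GApp : F -> list gterm -> gterm.

Fixpoint wf_term (t : term) : Prop :=
  match t with
  | Var _ => True
  | App f ts => length ts = ar f /\ fold_right (fun u acc => wf_term u /\ acc) True ts
  end.

Fixpoint wf_gterm (t : gterm) : Prop :=
  match t with
  | GApp f ts => length ts = ar f /\ fold_right (fun u acc => wf_gterm u /\ acc) True ts
  end.

Fixpoint gsize (t : gterm) : nat :=
  match t with
  | GApp _ ts => S (fold_right (fun u acc => gsize u + acc) 0 ts)
  end.

Fixpoint vars (t : term) : list nat :=
  match t with
  | Var x => [x]
  | App _ ts => flat_map vars ts
  end.

Record atom : Type := mkAtom { apred : Pd; aargs : list term }.
Record gatom : Type := mkGAtom { gpred : Pd; gargs : list gterm }.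

Inductive literal : Type :=
| Pos : atom -> literal
| Neg : atom -> literal.

Record clause : Type := mkClause { head : atom; body : list literal }.

Definition program := list clause.

Definition lit_atom (l : literal) : atom :=
  match l with Pos a => a | Neg a => a end.

Definition wf_atom (a : atom) : Prop := Forall wf_term (aargs a).
Definition wf_clause (c : clause) : Prop :=
  wf_atom (head c) /\ Forall (fun l => wf_atom (lit_atom l)) (body c).
Definition wf_program (P : program) : Prop := Forall wf_clause P.

Definition HB (A : gatom) : Prop := Forall wf_gterm (gargs A).

Definition atom_vars (a : atom) : list nat := flat_map vars (aargs a).
Definition clause_vars (c : clause) : list nat :=
  atom_vars (head c) ++ flat_map (fun l => atom_vars (lit_atom l)) (body c).

Definition gsubst := nat -> gterm.

Fixpoint subst (th : gsubst) (t : term) : gterm :=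
  match t with
  | Var x => th x
  | App f ts => GApp f (map (subst th) ts)
  end.

Definition subst_atom (th : gsubst) (a : atom) : gatom :=
  mkGAtom (apred a) (map (subst th) (aargs a)).

Definition ground_subst_for (c : clause) (th : gsubst) : Prop :=
  forall x, In x (clause_vars c) -> wf_gterm (th x).

Definition subst_size (c : clause) (th : gsubst) : nat :=
  fold_right (fun x acc => Nat.max (gsize (th x)) acc) 0 (clause_vars c).

Definition aset := gatom -> Prop.

Record interp : Type := mkInterp { Tr : aset; Fa : aset }.

Definition lit_true (I : interp) (l : literal) (th : gsubst) : Prop :=
  match l with
  | Pos a => Tr I (subst_atom th a)
  | Neg a => Fa I (subst_atom th a)
  end.

Definition lit_false (I : interp) (l : literal) (th : gsubst) : Prop :=
  match l with
  | Pos a => Fa I (subst_atom th a)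
  | Neg a => Tr I (subst_atom th a)
  end.

(* L theta \in S for a set S of atoms: only positive literals are atoms *)
Definition lit_in (S : aset) (l : literal) (th : gsubst) : Prop :=
  match l with
  | Pos a => S (subst_atom th a)
  | Neg _ => False
  end.

Definition produces (I : interp) (S : aset) (c : clause) (th : gsubst)
    (A : gatom) : Prop :=
  ~ Tr I A /\ ground_subst_for c th /\ A = subst_atom th (head c) /\
  (forall l, In l (body c) -> lit_true I l th \/ lit_in S l th).

Definition TrueOp (P : program) (I : interp) (S : aset) : aset :=
  fun A => exists c th, In c P /\ produces I S c th A.

Definition FalseOp (P : program) (I : interp) (S : aset) : aset :=
  fun A => HB A /\ ~ Fa I A /\
    forall c th, In c P -> ground_subst_for c th -> A = subst_atom th (head c) ->
      exists l, In l (body c) /\ (lit_false I l th \/ lit_in S l th).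

Fixpoint iterT (P : program) (I : interp) (n : nat) : aset :=
  match n with
  | O => fun _ => False
  | S m => TrueOp P I (iterT P I m)
  end.

(* T_I: least fixed point, obtained by iterating from the empty set *)
Definition TI (P : program) (I : interp) : aset :=
  fun A => exists n, iterT P I n A.

(* F_I: greatest fixed point of False^P_I inside the Herbrand base *)
Definition FI (P : program) (I : interp) : aset :=
  fun A => exists S : aset,
    (forall B, S B -> HB B) /\ (forall B, S B -> FalseOp P I S B) /\ S A.

Definition succ_stage (P : program) (I : interp) : interp :=
  mkInterp (fun A => Tr I A \/ TI P I A) (fun A => Fa I A \/ FI P I A).

Definition union_stage (K : interp -> Prop) : interp :=
  mkInterp (fun A => exists I, K I /\ Tr I A) (fun A => exists I, K I /\ Fa I A).

(* the stages WFM_alpha: generated from <empty;empty> by successor and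
   unions (limit stages) *)
Inductive stage (P : program) : interp -> Prop :=
| stage0 : stage P (mkInterp (fun _ => False) (fun _ => False))
| stageS : forall I, stage P I -> stage P (succ_stage P I)
| stageU : forall K : interp -> Prop,
    (forall I, K I -> stage P I) -> stage P (union_stage K).

Definition is_WFM (P : program) (W : interp) : Prop :=
  stage P W /\ (forall A, ~ TI P W A) /\ (forall A, ~ FI P W A).

Definition finite_set (S : aset) : Prop :=
  exists l : list gatom, forall A, S A -> In A l.

Definition bounded_term_size (P : program) : Prop :=
  exists L : nat, forall I, stage P I -> forall n A,
    TrueOp P I (iterT P I n) A ->
    exists c th, In c P /\ produces I (iterT P I n) c th A /\ subst_size c th < L.

End LP.

From Pilot Require Import Defs.
From Stdlib Require Import List Arith Lia Wf_nat Classical FunctionalExtensionality PropExtensionality.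
Import ListNotations.

(* The stages of the construction are linearly ordered by a tower argument, so
   their union W is itself a stage, at which True and False are stationary.
   Each atom A that ever becomes true does so at a unique stage I: the union of
   all stages in which A is not yet true.  If W has finitely many true atoms, a
   substitution producing A at the least iterate of True at I also produces A
   at every later iterate, and the largest of these finitely many sizes bounds
   every application.  Conversely, under a size bound every true atom is an
   instance of a clause head by a small substitution, and over finitely many
   function symbols there are only finitely many such instances. *)

Definition sumf {X} (g : X -> nat) (l : list X) : nat :=
  fold_right (fun x acc => g x + acc) 0 l.

Lemma sumf_in {X} (g : X -> nat) l x : In x l -> g x <= sumf g l.
Proof.
  induction l as [|y l IH]; simpl; [tauto|].
  intros [->|Hx]; [lia|]. specialize (IH Hx); lia.
Qed.

Fixpoint lists_upto {A} (k : nat) (C : list A) : list (list A) :=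
  match k with
  | 0 => [[]]
  | S k => [] :: flat_map (fun x => map (cons x) (lists_upto k C)) C
  end.

Lemma in_lists_upto {A} k C (l : list A) :
  length l <= k -> (forall x, In x l -> In x C) -> In l (lists_upto k C).
Proof.
  revert l; induction k as [|k IH]; intros [|x l] Hlen Hin; simpl in *; try lia; auto.
  right. apply in_flat_map. exists x. split; auto.
  apply in_map, IH; auto; lia.
Qed.

Lemma uniform_bound_on_list {X} (Q : X -> nat -> Prop)
  (Qmono : forall x L L', L <= L' -> Q x L -> Q x L')
  (Qex : forall x, exists L, Q x L) (l : list X) :
  exists L, forall x, In x l -> Q x L.
Proof.
  induction l as [|x l [L HL]]; [exists 0; simpl; tauto|].
  destruct (Qex x) as [Lx HLx].
  exists (Nat.max Lx L). intros y [<-|Hy].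
  - apply (Qmono x Lx); [lia|auto].
  - apply (Qmono y L); [lia|auto].
Qed.

Section Terms.
Variable F : Type.

Lemma gsize_GApp f ts : gsize F (GApp F f ts) = S (sumf (gsize F) ts).
Proof. reflexivity. Qed.

Lemma length_le_sum_gsize (ts : list (gterm F)) : length ts <= sumf (gsize F) ts.
Proof. induction ts as [|[] ts IH]; simpl in *; lia. Qed.

Fixpoint gterms_upto (Fl : list F) (n : nat) : list (gterm F) :=
  match n with
  | 0 => []
  | S n => flat_map (fun f => map (GApp F f) (lists_upto n (gterms_upto Fl n))) Fl
  end.

Lemma in_gterms_upto Fl (HF : forall f, In f Fl) n t :
  gsize F t <= n -> In t (gterms_upto Fl n).
Proof.
  revert t; induction n as [|n IH]; intros [f ts] Ht; rewrite gsize_GApp in Ht; [lia|].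
  simpl. apply in_flat_map. exists f. split; auto.
  apply in_map, in_lists_upto.
  - pose proof (length_le_sum_gsize ts); lia.
  - intros u Hu. apply IH. pose proof (sumf_in (gsize F) ts u Hu); lia.
Qed.

Definition term_ind_nested (Q : term F -> Prop) (HV : forall x, Q (Var F x))
  (HA : forall f ts, Forall Q ts -> Q (App F f ts)) : forall t, Q t :=
  fix rec t := match t with
  | Var _ x => HV x
  | App _ f ts => HA f ts ((fix recl ts := match ts return Forall Q ts with
       | [] => Forall_nil _
       | u :: us => Forall_cons _ (rec u) (recl us) end) ts)
  end.

Fixpoint tsize (t : term F) : nat :=
  match t with
  | Var _ _ => 1
  | App _ _ ts => S (sumf tsize ts)
  end.

Lemma gsize_subst_le th B t :
  (forall x, In x (vars F t) -> gsize F (th x) <= B) ->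
  gsize F (subst F th t) <= tsize t * S B.
Proof.
  induction t as [x|f ts Hts] using term_ind_nested; intro Hvars; simpl in *.
  - specialize (Hvars x (or_introl eq_refl)); lia.
  - enough (sumf (gsize F) (map (subst F th) ts) <= sumf tsize ts * S B)
      by (unfold sumf in *; nia).
    clear f. induction Hts as [|u ts Hu Hts IH]; simpl in *; [lia|].
    specialize (Hu (fun x Hx => Hvars x (in_or_app _ _ _ (or_introl Hx)))).
    specialize (IH (fun x Hx => Hvars x (in_or_app _ _ _ (or_intror Hx)))).
    unfold sumf in *; nia.
Qed.

End Terms.

Section WellFounded.
Variables (F : Type) (ar : F -> nat) (Pd : Type) (P : program F Pd).

Local Notation interp := (interp F Pd).
Local Notation tr := (Tr F Pd).
Local Notation fa := (Fa F Pd).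
Local Notation stage := (stage F ar Pd P).
Local Notation succ := (succ_stage F ar Pd P).
Local Notation union := (union_stage F Pd).
Local Notation iterT := (iterT F ar Pd P).
Local Notation TrueOp := (TrueOp F ar Pd P).
Local Notation produces := (produces F ar Pd).

Definition interp_le (I J : interp) : Prop :=
  (forall A, tr I A -> tr J A) /\ (forall A, fa I A -> fa J A).

Local Infix "⊑" := interp_le (at level 70).

Lemma interp_le_antisym I J : I ⊑ J -> J ⊑ I -> I = J.
Proof.
  destruct I as [t1 f1], J as [t2 f2]; intros [Ht Hf] [Ht' Hf']; simpl in *.
  f_equal; apply functional_extensionality; intro A;
    apply propositional_extensionality; split; auto.
Qed.

Lemma interp_le_refl I : I ⊑ I.
Proof. split; auto. Qed.

Lemma interp_le_trans I J K : I ⊑ J -> J ⊑ K -> I ⊑ K.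
Proof. intros [? ?] [? ?]; split; auto. Qed.

Lemma interp_le_succ I : I ⊑ succ I.
Proof. split; simpl; auto. Qed.

Lemma interp_le_bot J : mkInterp F Pd (fun _ => False) (fun _ => False) ⊑ J.
Proof. split; simpl; tauto. Qed.

Lemma interp_le_union K I : K I -> I ⊑ union K.
Proof. intro KI; split; intros A HA; simpl; eauto. Qed.

Lemma union_le K J : (forall I, K I -> I ⊑ J) -> union K ⊑ J.
Proof. intro H; split; simpl; intros A [I [KI HA]]; apply (H I KI); auto. Qed.

Definition stage_cut (x : interp) : Prop :=
  forall y, stage y -> x ⊑ y \/ succ y ⊑ x.

Lemma stage_cut_le_or_succ_le x :
  stage x -> stage_cut x -> forall y, stage y -> y ⊑ x \/ succ x ⊑ y.
Proof.
  intros Hx Hcut y Hy; induction Hy as [|y Hy IH|K HK IH].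
  - left; apply interp_le_bot.
  - destruct IH as [Hyx|Hxy].
    + destruct (Hcut y Hy) as [Hxy|Hsy]; [|left; auto].
      rewrite (interp_le_antisym x y); auto. right; apply interp_le_refl.
    + right; eapply interp_le_trans; [exact Hxy|apply interp_le_succ].
  - destruct (classic (forall z, K z -> z ⊑ x)) as [Hall|Hnot].
    + left; apply union_le; auto.
    + destruct (not_all_ex_not _ _ Hnot) as [z Hz].
      destruct (imply_to_and _ _ Hz) as [Kz Hzx].
      destruct (IH z Kz) as [?|Hxz]; [contradiction|].
      right; eapply interp_le_trans; [exact Hxz|apply interp_le_union; auto].
Qed.

Lemma stage_is_cut x : stage x -> stage_cut x.
Proof.
  induction 1 as [|x Hx IH|K HK IH]; intros y Hy.
  - left; apply interp_le_bot.
  - destruct (stage_cut_le_or_succ_le x Hx IH y Hy) as [Hyx|Hsx]; [|left; auto].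
    destruct (IH y Hy) as [Hxy|Hsy].
    + rewrite (interp_le_antisym x y); auto. right; apply interp_le_refl.
    + right; eapply interp_le_trans; [exact Hsy|apply interp_le_succ].
  - destruct (classic (forall z, K z -> z ⊑ y)) as [Hall|Hnot].
    + left; apply union_le; auto.
    + destruct (not_all_ex_not _ _ Hnot) as [z Hz].
      destruct (imply_to_and _ _ Hz) as [Kz Hzy].
      destruct (IH z Kz y Hy) as [?|Hsy]; [contradiction|].
      right; eapply interp_le_trans; [exact Hsy|apply interp_le_union; auto].
Qed.

Lemma stage_le_or_succ_le x y : stage x -> stage y -> y ⊑ x \/ succ x ⊑ y.
Proof. intros Hx; apply stage_cut_le_or_succ_le, stage_is_cut; auto. Qed.

Definition WFM : interp := union stage.

Lemma stage_WFM : stage WFM.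
Proof. apply stageU; auto. Qed.

Lemma TrueOp_not_true I S A : TrueOp I S A -> ~ tr I A.
Proof. intros [c [th [_ [HA _]]]]; auto. Qed.

Lemma TI_not_true I A : TI F ar Pd P I A -> ~ tr I A.
Proof. intros [[|n] HA]; [contradiction|]. exact (TrueOp_not_true _ _ _ HA). Qed.

Lemma FI_not_false I A : FI F ar Pd P I A -> ~ fa I A.
Proof. intros [S [_ [HS HA]]]; apply (HS A HA). Qed.

Lemma is_WFM_WFM : is_WFM F ar Pd P WFM.
Proof.
  assert (succ WFM ⊑ WFM) as [Htr Hfa] by apply interp_le_union, stageS, stage_WFM.
  split; [apply stage_WFM|split].
  - intros A HA. apply (TI_not_true _ _ HA), Htr; simpl; auto.
  - intros A HA. apply (FI_not_false _ _ HA), Hfa; simpl; auto.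
Qed.

Lemma TrueOp_iterT_succ I n A : TrueOp I (iterT I n) A -> tr (succ I) A.
Proof. intro HA; simpl; right; exists (S n); exact HA. Qed.

Lemma first_true_stage_unique I J A : stage I -> stage J ->
  ~ tr I A -> tr (succ I) A -> ~ tr J A -> tr (succ J) A -> I = J.
Proof.
  intros HI HJ nI sI nJ sJ.
  set (D := fun K => stage K /\ ~ tr K A).
  assert (HD : stage (union D)) by (apply stageU; intros K [? ?]; auto).
  assert (nD : ~ tr (union D) A) by (simpl; intros [K [[_ nK] HK]]; auto).
  assert (Hfirst : forall K, stage K -> ~ tr K A -> tr (succ K) A -> K = union D).
  { intros K HK nK sK.
    destruct (stage_le_or_succ_le K (union D) HK HD) as [HDK|HsK].
    - apply interp_le_antisym; auto. apply interp_le_union; split; auto.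
    - exfalso; apply nD, HsK; auto. }
  rewrite (Hfirst I), (Hfirst J); auto.
Qed.

Lemma produces_mono I S S' c th A : (forall B, S B -> S' B) ->
  produces I S c th A -> produces I S' c th A.
Proof.
  intros HS [H1 [H2 [H3 Hbody]]]; repeat split; auto.
  intros [a|a] Hl; destruct (Hbody _ Hl); simpl in *; auto.
Qed.

Lemma iterT_succ I n A : iterT I n A -> iterT I (S n) A.
Proof.
  revert A; induction n as [|n IH]; simpl; [tauto|].
  intros A [c [th [Hc Hp]]]; exists c, th; split; auto; eapply produces_mono; eauto.
Qed.

Lemma iterT_mono I n m A : n <= m -> iterT I n A -> iterT I m A.
Proof. induction 1; auto using iterT_succ. Qed.

Definition bounded_witness (A : gatom F Pd) (L : nat) : Prop :=
  forall I, stage I -> forall n, TrueOp I (iterT I n) A ->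
    exists c th, In c P /\ produces I (iterT I n) c th A /\ subst_size F Pd c th < L.

Lemma bounded_witness_mono A L L' : L <= L' -> bounded_witness A L -> bounded_witness A L'.
Proof.
  intros HL H I HI n Hn. destruct (H I HI n Hn) as [c [th [? [? ?]]]].
  exists c, th; split; [|split]; auto; lia.
Qed.

Lemma exists_bounded_witness A : exists L, bounded_witness A L.
Proof.
  destruct (classic (exists I n, stage I /\ TrueOp I (iterT I n) A))
    as [[I0 [n1 [HI0 Hn1]]]|Hnone].
  2: { exists 0; intros I HI n Hn; exfalso; eauto. }
  destruct (dec_inh_nat_subset_has_unique_least_element
              (fun n => TrueOp I0 (iterT I0 n) A) (fun n => classic _)
              (ex_intro _ n1 Hn1)) as [n0 [[Hn0 Hmin] _]].
  destruct Hn0 as [c0 [th0 [Hc0 Hp0]]].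
  exists (S (subst_size F Pd c0 th0)). intros I HI n Hn.
  assert (I = I0) as ->.
  { eapply first_true_stage_unique; eauto using TrueOp_not_true, TrueOp_iterT_succ. }
  exists c0, th0; split; [|split]; auto.
  eapply produces_mono; [|exact Hp0]. intro B; apply iterT_mono, Hmin, Hn.
Qed.

Lemma finite_true_bounded : finite_set F Pd (tr WFM) -> bounded_term_size F ar Pd P.
Proof.
  intros [l Hl].
  destruct (uniform_bound_on_list _ bounded_witness_mono exists_bounded_witness l) as [L HL].
  exists L; intros I HI n A Hn. apply (HL A); auto.
  apply Hl; exists (succ I); split; [apply stageS; auto|eapply TrueOp_iterT_succ; eauto].
Qed.

Lemma gsize_le_subst_size c th x :
  In x (clause_vars F Pd c) -> gsize F (th x) <= subst_size F Pd c th.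
Proof.
  unfold subst_size. induction (clause_vars F Pd c) as [|y l IH]; simpl; [tauto|].
  intros [->|Hx]; [lia|]. specialize (IH Hx); lia.
Qed.

Definition head_instances (Fl : list F) (L : nat) (c : clause F Pd) : list (gatom F Pd) :=
  let args := aargs F Pd (Defs.head F Pd c) in
  map (mkGAtom F Pd (apred F Pd (Defs.head F Pd c)))
      (lists_upto (length args) (gterms_upto F Fl (sumf (fun t => tsize F t * S L) args))).

Lemma in_head_instances Fl (HF : forall f, In f Fl) L c th :
  subst_size F Pd c th < L -> In (subst_atom F Pd th (Defs.head F Pd c)) (head_instances Fl L c).
Proof.
  intro Hsize. unfold subst_atom. apply in_map, in_lists_upto; [rewrite length_map; auto|].
  intros u Hu. apply in_map_iff in Hu as [t [<- Ht]].
  apply in_gterms_upto; auto.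
  eapply Nat.le_trans; [apply (gsize_subst_le F th L t)|].
  - intros x Hx. enough (gsize F (th x) <= subst_size F Pd c th) by lia.
    apply gsize_le_subst_size.
    unfold clause_vars, atom_vars. apply in_or_app; left; apply in_flat_map; eauto.
  - exact (sumf_in (fun t => tsize F t * S L) _ t Ht).
Qed.

Lemma true_atom_small_head_instance L : (forall A, bounded_witness A L) ->
  forall I, stage I -> forall A, tr I A ->
    exists c th, In c P /\ A = subst_atom F Pd th (Defs.head F Pd c) /\ subst_size F Pd c th < L.
Proof.
  intro HL; induction 1 as [|I HI IH|K HK IH]; simpl.
  - tauto.
  - intros A [HA|[[|n] Hn]]; [auto|contradiction|].
    destruct (HL A I HI n Hn) as [c [th [Hc [[_ [_ [HA _]]] Hsize]]]]; eauto.
  - intros A [I [KI HA]]; eauto.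
Qed.

Lemma bounded_finite_true (Ffin : exists Fl : list F, forall f, In f Fl) :
  bounded_term_size F ar Pd P -> finite_set F Pd (tr WFM).
Proof.
  intros [L HL]. destruct Ffin as [Fl HF].
  exists (flat_map (head_instances Fl L) P). intros A [I [HI HA]].
  destruct (true_atom_small_head_instance L (fun A I HI n => HL I HI n A) I HI A HA)
    as [c [th [Hc [-> Hsize]]]].
  apply in_flat_map; eauto using in_head_instances.
Qed.

End WellFounded.

Theorem theorem1 (F : Type) (ar : F -> nat) (Pd : Type)
  (Ffin : exists l : list F, forall f : F, In f l)
  (P : program F Pd) (HP : wf_program F ar Pd P) :
  exists W : interp F Pd,
    is_WFM F ar Pd P W /\
    (finite_set F Pd (Tr F Pd W) <-> bounded_term_size F ar Pd P).
Proof.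
  exists (WFM F ar Pd P). split; [apply is_WFM_WFM|split].
  - apply finite_true_bounded.
  - apply bounded_finite_true, Ffin.
Qed.
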